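(* There exist two non-isomorphic simple graphs $G_1$ and $G_2$, each on $8$ vertices, such that $P(G_1;x,\lambda)=P(G_2;x,\lambda)$. Consequently, the bivariate permanent polynomial is not a graph characterising polynomial.
   Context: All graphs are finite, simple and undirected. For a graph $G$ on $n$ vertices, let $A$ be its adjacency matrix and $\bar A$ the adjacency matrix of its complement $\bar G$, both with respect to the same vertex ordering. The permanent of an $n\times n$ matrix $M=(m_{ij})$ is $\mathrm{per}(M)=\sum_{\sigma\in S_n}\prod_{i=1}^n m_{i\sigma(i)}$. The bivariate permanent polynomial of $G$ is $P(G;x,\lambda)=\mathrm{per}(xI_n+\lambda A+\bar A)\in\mathbb{Z}[x,\lambda]$, where $I_n$ is the $n\times n$ identity matrix. A graph polynomial is called graph characterising if any two graphs with the same polynomial are isomorphic. *)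

From HB Require Import structures.
From mathcomp Require Import all_boot all_order all_algebra all_fingroup.
Set Implicit Arguments. Unset Strict Implicit. Unset Printing Implicit Defensive.
Import GRing.Theory.
Local Open Scope ring_scope.

Definition simple_graph (n : nat) (e : rel 'I_n) : Prop :=
  (forall i, e i i = false) /\ (forall i j, e i j = e j i).

Definition isomorphic (n : nat) (e1 e2 : rel 'I_n) : Prop :=
  exists f : {perm 'I_n}, forall i j, e2 (f i) (f j) = e1 i j.

(* Bivariate polynomials Z[x, lambda] as {poly {poly int}}:
   x is the outer variable, lambda the inner variable. *)
Definition bipoly := {poly {poly int}}.
Definition varx : bipoly := 'X.
Definition varl : bipoly := ('X)%:P.

Definition per (R : comNzRingType) (n : nat) (M : 'M[R]_n) : R :=
  \sum_(s : 'S_n) \prod_(i < n) M i (s i).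

Definition adjmx (R : nzRingType) (n : nat) (e : rel 'I_n) : 'M[R]_n :=
  \matrix_(i, j) (e i j)%:R.
Definition coadjmx (R : nzRingType) (n : nat) (e : rel 'I_n) : 'M[R]_n :=
  \matrix_(i, j) ((i != j) && ~~ e i j)%:R.

Definition perpoly (n : nat) (e : rel 'I_n) : bipoly :=
  per (varx%:M + varl *: adjmx bipoly e + coadjmx bipoly e).

From mathcomp Require Import all_boot all_order all_algebra all_fingroup.
Set Implicit Arguments. Unset Strict Implicit. Unset Printing Implicit Defensive.
Import GRing.Theory.
Local Open Scope ring_scope.

(** For a loopless graph the (i, j) entry of [x I + lambda A + Abar] is the
    monomial [x^[i = j] lambda^[ij edge]], so [P(G)] is the sum over all
    permutations [s] of [x^(fixed points of s) lambda^(edges ij with j = s i)].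
    Hence [P(G)] only depends on the multiset of these exponent pairs, which
    for the two explicit graphs below is compared by computation over the
    [8! = 40320] permutations.  The graphs are not isomorphic because in [G1]
    the vertex 3 of degree 2 has two neighbours of degree 5, while no vertex
    of degree 2 of [G2] has that property. *)

Section PermanentPolynomial.

Variables (n : nat) (e : rel 'I_n).
Hypothesis e_irr : forall i, e i i = false.

Lemma perpoly_mxE i j :
  (varx%:M + varl *: adjmx bipoly e + coadjmx bipoly e) i j
  = varx ^+ (i == j) * varl ^+ (e i j).
Proof.
rewrite !mxE; have [->|ne] := eqVneq i j; rewrite ?e_irr /=.
  by rewrite mulr0 !addr0 expr0 mulr1.
rewrite mulr0n add0r expr0 mul1r.
by case: (e i j); rewrite /= ?mulr1 ?mulr0 ?addr0 ?add0r.
Qed.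

Lemma perpoly_monomials :
  perpoly e = \sum_(s : 'S_n) varx ^+ (\sum_i (i == s i : nat))%N
                                * varl ^+ (\sum_i (e i (s i) : nat))%N.
Proof.
apply: eq_bigr => s _; rewrite -!prodrXr -big_split /=.
by apply: eq_bigr => i _; apply: perpoly_mxE.
Qed.

End PermanentPolynomial.

Lemma sum_ord_iota n (F : nat -> nat) :
  (\sum_(i < n) F i)%N = sumn [seq F k | k <- iota 0 n].
Proof. by rewrite sumnE big_map -(big_mkord xpredT F) /index_iota subn0. Qed.

Lemma sumn_map_bool (b : nat -> bool) (s : seq nat) :
  (sumn [seq (b k : nat) | k <- s] <= size s)%N.
Proof. by elim: s => //= a s IH; rewrite -add1n leq_add ?leq_b1. Qed.

Section PermSeq.

Variable n : nat.

Definition perm_seq (s : 'S_n) : seq nat := [seq val (s i) | i <- enum 'I_n].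

Lemma nth_perm_seq s (i : 'I_n) : nth 0 (perm_seq s) i = s i.
Proof. by rewrite (nth_map i) ?nth_ord_enum // size_enum_ord. Qed.

Lemma perm_seq_inj : injective perm_seq.
Proof.
move=> s1 s2 eq_s; apply/permP => i; apply: val_inj.
by rewrite /= -!nth_perm_seq eq_s.
Qed.

Lemma perm_seq_permutations s : perm_seq s \in permutations (iota 0 n).
Proof.
rewrite mem_permutations; apply: uniq_perm; rewrite ?iota_uniq //.
  by rewrite map_inj_uniq ?enum_uniq // => i j /val_inj; apply: perm_inj.
move=> k; rewrite mem_iota /=; apply/mapP/idP => [[i _ ->]|lt_kn].
  by rewrite ltn_ord.
by exists (s^-1 (Ordinal lt_kn))%g; rewrite ?mem_enum ?permKV.
Qed.

Lemma perm_eq_perm_seq :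
  perm_eq (map perm_seq (index_enum (perm_of 'I_n))) (permutations (iota 0 n)).
Proof.
have uniq_ps : uniq (map perm_seq (index_enum (perm_of 'I_n))).
  by rewrite (map_inj_uniq perm_seq_inj) index_enum_uniq.
have sub_ps : {subset map perm_seq (index_enum (perm_of 'I_n))
                 <= permutations (iota 0 n)}.
  by move=> t /mapP [s _ ->]; apply: perm_seq_permutations.
have size_ps : (size (permutations (iota 0 n))
                  <= size (map perm_seq (index_enum (perm_of 'I_n))))%N.
  rewrite size_map (size_permutations (iota_uniq 0 n)) size_iota.
  by rewrite -card_Sn cardT enumT [index_enum _]unlock.
have [_ eq_size] := uniq_min_size uniq_ps sub_ps size_ps.
exact: uniq_perm uniq_ps (permutations_uniq _) eq_size.
Qed.

End PermSeq.

Section EdgeList.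

Variables (n : nat) (g : seq (nat * nat)).

Definition adjb (i j : nat) : bool := ((i, j) \in g) || ((j, i) \in g).

Definition edge_rel : rel 'I_n := fun i j => adjb i j.

Lemma edge_rel_simple : all (fun p => p.1 != p.2) g -> simple_graph edge_rel.
Proof.
move=> /allP loopless; split=> [i|i j]; last by rewrite /edge_rel /adjb orbC.
by rewrite /edge_rel /adjb orbb; apply/negbTE/negP => /loopless /=; rewrite eqxx.
Qed.

Definition seq_fixpoints (t : seq nat) : nat :=
  sumn [seq (k == nth 0 t k : nat) | k <- iota 0 n].
Definition seq_edges (t : seq nat) : nat :=
  sumn [seq (adjb k (nth 0 t k) : nat) | k <- iota 0 n].

(** The exponent pair [(a, b)] of a monomial [x^a lambda^b] with [b <= n] is
    coded by the natural number [a * n.+1 + b], which is cheap to sort. *)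
Definition monomial_code (t : seq nat) : nat :=
  (seq_fixpoints t * n.+1 + seq_edges t)%N.

Definition code_monomial (c : nat) : bipoly :=
  varx ^+ (c %/ n.+1) * varl ^+ (c %% n.+1).

Lemma perpoly_edge_rel (e_irr : forall i, edge_rel i i = false) :
  perpoly edge_rel
  = \sum_(t <- permutations (iota 0 n)) code_monomial (monomial_code t).
Proof.
rewrite perpoly_monomials // -(perm_big _ (perm_eq_perm_seq n)) big_map.
apply: eq_bigr => s _.
have fixE : (\sum_i (i == s i : nat))%N = seq_fixpoints (perm_seq s).
  rewrite /seq_fixpoints -sum_ord_iota.
  by apply: eq_bigr => i _; rewrite nth_perm_seq.
have edgesE : (\sum_i (edge_rel i (s i) : nat))%N = seq_edges (perm_seq s).
  rewrite /seq_edges -sum_ord_iota.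
  by apply: eq_bigr => i _; rewrite nth_perm_seq.
have edges_small : (seq_edges (perm_seq s) < n.+1)%N.
  by rewrite ltnS (leq_trans (sumn_map_bool _ _)) ?size_iota.
rewrite /code_monomial /monomial_code fixE edgesE.
by rewrite divnMDl // modnMDl divn_small ?addn0 ?modn_small.
Qed.

Definition seq_deg (i : nat) : nat := sumn [seq (adjb i j : nat) | j <- iota 0 n].

End EdgeList.

Arguments edge_rel : clear implicits.

Lemma perpoly_edge_rel_eq n g1 g2 :
  (forall i, edge_rel n g1 i i = false) -> (forall i, edge_rel n g2 i i = false) ->
  perm_eq (map (monomial_code n g1) (permutations (iota 0 n)))
          (map (monomial_code n g2) (permutations (iota 0 n))) ->
  perpoly (edge_rel n g1) = perpoly (edge_rel n g2).
Proof.
move=> irr1 irr2 eq_codes; rewrite !perpoly_edge_rel //.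
rewrite -(big_map (monomial_code n g1) xpredT (code_monomial n)).
rewrite -(big_map (monomial_code n g2) xpredT (code_monomial n)).
exact: perm_big eq_codes.
Qed.

Section Wedge.

Variable n : nat.

Definition deg (e : rel 'I_n) (i : 'I_n) : nat := (\sum_j (e i j : nat))%N.

Lemma deg_iso (e1 e2 : rel 'I_n) (f : {perm 'I_n}) :
  (forall i j, e2 (f i) (f j) = e1 i j) -> forall i, deg e2 (f i) = deg e1 i.
Proof.
move=> f_iso i; rewrite /deg (reindex_inj (@perm_inj _ f)) /=.
by apply: eq_bigr => j _; rewrite f_iso.
Qed.

Definition has_wedge (p q : nat) (e : rel 'I_n) : Prop :=
  exists a b c, [/\ b != c, deg e a = p, deg e b = q, deg e c = q
                  & e a b && e a c].

Lemma has_wedge_iso p q (e1 e2 : rel 'I_n) :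
  isomorphic e1 e2 -> has_wedge p q e1 -> has_wedge p q e2.
Proof.
move=> [f f_iso] [a [b [c [ne_bc da db dc eab_ac]]]].
exists (f a), (f b), (f c).
by rewrite (inj_eq perm_inj) !(deg_iso f_iso) !f_iso.
Qed.

Lemma deg_edge_rel g i : deg (edge_rel n g) i = seq_deg n g i.
Proof. exact: (sum_ord_iota n (adjb g i)). Qed.

Lemma has_wedge_edge_rel p q g :
  has_wedge p q (edge_rel n g) ->
  has (fun a => has (fun b => has (fun c =>
    [&& seq_deg n g a == p, seq_deg n g b == q, seq_deg n g c == q, b != c,
        adjb g a b & adjb g a c]) (iota 0 n)) (iota 0 n)) (iota 0 n).
Proof.
have in_iota (i : 'I_n) : val i \in iota 0 n by rewrite mem_iota ltn_ord.
move=> [a [b [c [ne_bc da db dc /andP [eab eac]]]]].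
apply/hasP; exists (val a) => //; apply/hasP; exists (val b) => //.
apply/hasP; exists (val c) => //.
rewrite /edge_rel in eab eac.
by rewrite -!deg_edge_rel da db dc !eqxx val_eqE ne_bc eab eac.
Qed.

End Wedge.

Definition G1 : seq (nat * nat) :=
  [:: (0,1);(0,5);(1,2);(1,4);(1,7);(2,3);(2,4);(2,5);(2,6);(3,6);(4,6);(4,7);(5,6);(6,7)].
Definition G2 : seq (nat * nat) :=
  [:: (0,1);(0,4);(0,6);(1,2);(1,3);(1,4);(1,5);(2,7);(3,4);(3,5);(3,6);(4,6);(4,7);(6,7)].

Theorem mainTheorem1 :
  exists e1 e2 : rel 'I_8,
    [/\ simple_graph e1, simple_graph e2, ~ isomorphic e1 e2
      & perpoly e1 = perpoly e2].
Proof.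
have [irr1 _] := @edge_rel_simple 8 G1 isT.
have [irr2 _] := @edge_rel_simple 8 G2 isT.
exists (edge_rel 8 G1), (edge_rel 8 G2); split.
- exact: edge_rel_simple.
- exact: edge_rel_simple.
- have wedge1 : has_wedge 2 5 (edge_rel 8 G1).
    exists (@Ordinal 8 3 isT), (@Ordinal 8 2 isT), (@Ordinal 8 6 isT).
    by rewrite !deg_edge_rel; vm_compute.
  have no_wedge2 : ~ has_wedge 2 5 (edge_rel 8 G2).
    by move=> /has_wedge_edge_rel; vm_compute.
  by move=> iso12; apply/no_wedge2/(has_wedge_iso iso12).
- apply: perpoly_edge_rel_eq irr1 irr2 _.
  by apply/(perm_sortP leq_total leq_trans anti_leq)/eqP; vm_compute.
Qed.
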